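(* Let $G$ be a group. Then $G$ is sofic as a group if and only if $G$ is strongly sofic as a monoid.
   Context: Hamming metric on $\operatorname{Map}(D)$ (monoid of maps $D\to D$, $D$ finite non-empty): $d_D^{\mathrm{Ham}}(f,g)=\frac{1}{|D|}|\{v:f(v)\ne g(v)\}|$. A group $G$ is sofic (as a group) if for every finite $K\subset G$ and $\varepsilon>0$ there are a non-empty finite set $D$ and a map $\sigma\colon G\to\mathrm{Sym}(D)$ (permutations of $D$) with $\sigma(1_G)=\mathrm{Id}_D$, $d_D^{\mathrm{Ham}}(\sigma(k_1k_2),\sigma(k_1)\sigma(k_2))\le\varepsilon$ for all $k_1,k_2\in K$, and $d_D^{\mathrm{Ham}}(\sigma(k_1),\sigma(k_2))\ge1-\varepsilon$ for all distinct $k_1,k_2\in K$. A monoid $M$ is strongly sofic if for every finite $K\subset M$ there is an integer $\Delta_K\ge1$ such that for every $\varepsilon>0$ there exist a non-empty finite set $D$ and a map $\sigma\colon M\to\operatorname{Map}(D)$ with (1) $\sigma(1_M)=\mathrm{Id}_D$; (2) $d_D^{\mathrm{Ham}}(\sigma(k_1k_2),\sigma(k_1)\sigma(k_2))\le\varepsilon$ for $k_1,k_2\in K$; (3) $d_D^{\mathrm{Ham}}(\sigma(k_1),\sigma(k_2))\ge1-\varepsilon$ for distinct $k_1,k_2\in K$; (4) $|\sigma(k)^{-1}(v)|\le\Delta_K$ for $k\in K$, $v\in D$. *)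

From Stdlib Require Import Reals List.
From mathcomp Require Import all_boot all_fingroup.

Set Implicit Arguments.
Unset Strict Implicit.
Unset Printing Implicit Defensive.

Definition is_monoid (M : Type) (mul : M -> M -> M) (one : M) : Prop :=
  (forall x y z, mul x (mul y z) = mul (mul x y) z) /\
  (forall x, mul one x = x) /\ (forall x, mul x one = x).

Definition is_group (G : Type) (mul : G -> G -> G) (one : G) (inv : G -> G) : Prop :=
  is_monoid mul one /\ (forall x, mul (inv x) x = one) /\ (forall x, mul x (inv x) = one).

Definition d_ham (D : finType) (f g : D -> D) : R :=
  Rdiv (INR #|[set v : D | f v != g v]|) (INR #|D|).

Definition sofic_group (G : Type) (mul : G -> G -> G) (one : G) : Prop :=
  forall (K : list G) (eps : R), Rlt 0 eps ->
    exists (D : finType) (sigma : G -> {perm D}),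
      0 < #|D| /\
      sigma one = 1%g /\
      (forall k1 k2, In k1 K -> In k2 K ->
         Rle (d_ham (fun v => sigma (mul k1 k2) v) (fun v => sigma k1 (sigma k2 v))) eps) /\
      (forall k1 k2, In k1 K -> In k2 K -> k1 <> k2 ->
         Rle (Rminus 1 eps) (d_ham (fun v => sigma k1 v) (fun v => sigma k2 v))).

Definition strongly_sofic_monoid (M : Type) (mul : M -> M -> M) (one : M) : Prop :=
  forall K : list M, exists Delta : nat, 1 <= Delta /\
    forall eps : R, Rlt 0 eps ->
      exists (D : finType) (sigma : M -> D -> D),
        0 < #|D| /\
        (forall v, sigma one v = v) /\
        (forall k1 k2, In k1 K -> In k2 K ->
           Rle (d_ham (sigma (mul k1 k2)) (fun v => sigma k1 (sigma k2 v))) eps) /\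
        (forall k1 k2, In k1 K -> In k2 K -> k1 <> k2 ->
           Rle (Rminus 1 eps) (d_ham (sigma k1) (sigma k2))) /\
        (forall k v, In k K -> #|[set u : D | sigma k u == v]| <= Delta).

From Stdlib Require Import Reals List Lra ClassicalEpsilon Classical.
From mathcomp Require Import all_boot all_fingroup zify.

(* A sofic approximation by permutations is strongly sofic with fiber bound 1.
   Conversely, let s be an approximation of a group by maps whose fibers have
   size at most Delta.  As s(g) s(g^-1) is close to s(1) = id, the map s(g) is
   injective on the image under s(g^-1) of the points where s(g) s(g^-1) is the
   identity, so it agrees with some permutation tau(g) outside a small set.
   Replacing s by tau costs (Delta + 3) eps in the multiplicativity defect
   (Delta comes from precomposing with s(k2), whose fibers have size at most
   Delta) and 2 eps in the separation, so it suffices to start from an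
   approximation with eps / (Delta + 3) on a finite inverse-closed set
   containing K and K K. *)

Set Implicit Arguments.
Unset Strict Implicit.
Unset Printing Implicit Defensive.

Definition hamming (D : finType) (f g : D -> D) : nat := #|[set v | f v != g v]|.

Section Hamming.
Variable D : finType.
Implicit Types (f g h a b : D -> D) (A : {set D}).

Lemma hammingC f g : hamming f g = hamming g f.
Proof. by apply: eq_card => v; rewrite !inE eq_sym. Qed.

Lemma hamming_triangle f g h : hamming f h <= hamming f g + hamming g h.
Proof.
apply: leq_trans (leq_card_setU _ _); apply: subset_leq_card; apply/subsetP => v.
by rewrite !inE; case: (f v =P g v) => [->|].
Qed.

Lemma hamming_compl h a b :
  hamming (fun v => h (a v)) (fun v => h (b v)) <= hamming a b.
Proof.
by apply: subset_leq_card; apply/subsetP => v; rewrite !inE; apply: contra => /eqP ->.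
Qed.

Lemma hamming_compr (n : nat) h a b :
  (forall u, #|[set v | h v == u]| <= n) ->
  hamming (fun v => a (h v)) (fun v => b (h v)) <= n * hamming a b.
Proof.
move=> fiber_h; rewrite /hamming -sum1_card.
rewrite (partition_big h [in [set u | a u != b u]]) => [|v]; last by rewrite !inE.
rewrite mulnC -sum_nat_const; apply: leq_sum => u _.
apply: leq_trans (fiber_h u); rewrite -sum1_card big_mkcond [X in _ <= X]big_mkcond.
by apply: leq_sum => v _; rewrite !inE; case: (_ != _); case: (_ == _).
Qed.

Lemma hamming_comp (n : nat) a a' b b' :
  (forall u, #|[set v | b v == u]| <= n) ->
  hamming (fun v => a (b v)) (fun v => a' (b' v)) <= n * hamming a a' + hamming b b'.
Proof.
move=> fiber_b; apply: leq_trans (hamming_triangle _ (fun v => a' (b v)) _) _.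
exact: leq_add (hamming_compr _ _ fiber_b) (hamming_compl _ _ _).
Qed.

Lemma perm_extend A f : {in A &, injective f} -> exists p : {perm D}, {in A, p =1 f}.
Proof.
move: {2}#|~: A| (erefl #|~: A|) => n; elim: n A f => [|n IHn] A f cardAC f_inj.
  move/eqP: cardAC; rewrite cards_eq0 => /eqP AC0.
  have A_full x : x \in A by rewrite -[A]setCK AC0 setC0 inE.
  have f_inj' : injective f by move=> x y; apply: f_inj; apply: A_full.
  by exists (perm f_inj') => x _; rewrite permE.
have [u uAC] : exists u, u \in ~: A by apply/card_gt0P; rewrite cardAC.
have [w wfAC] : exists w, w \in ~: (f @: A).
  apply/card_gt0P; have := cardsC (f @: A); have := cardsC A.
  by rewrite card_in_imset //; lia.
pose f' x := if x == u then w else f x.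
have card_uAC : #|~: (u |: A)| = n.
  by rewrite setCU; move: cardAC; rewrite (cardsD1 u (~: A)) uAC setDE setIC => -[].
have f'_inj : {in u |: A &, injective f'}.
  move=> x y; rewrite !inE /f'.
  case: (eqVneq x u) => [->|xu]; case: (eqVneq y u) => [->|yu] //= xA yA.
  - by move=> wfy; move: wfAC; rewrite inE wfy imset_f.
  - by move=> fxw; move: wfAC; rewrite inE -fxw imset_f.
  - exact: f_inj.
have [p pE] := IHn _ _ card_uAC f'_inj.
exists p => x xA; rewrite pE ?inE ?xA ?orbT // /f'.
by case: eqP => // xu; move: uAC; rewrite -xu inE xA.
Qed.

Lemma perm_approx_hamming f h :
  exists p : {perm D}, hamming p f <= hamming (fun v => f (h v)) id.
Proof.
pose A := [set v | f (h v) == v].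
have h_inj : {in A &, injective h}.
  by move=> v w; rewrite !inE => /eqP fhv /eqP fhw hvw; rewrite -fhv -fhw hvw.
have f_inj : {in h @: A &, injective f}.
  move=> _ _ /imsetP[v vA ->] /imsetP[w wA ->]; move: vA wA.
  by rewrite !inE => /eqP fhv /eqP fhw; rewrite fhv fhw => ->.
have [p pE] := perm_extend f_inj.
exists p; apply: leq_trans (_ : #|~: (h @: A)| <= _).
  by apply: subset_leq_card; apply/subsetP => v; rewrite !inE; apply: contra => /pE ->.
have -> : hamming (fun v => f (h v)) id = #|~: A| by apply: eq_card => v; rewrite !inE.
by have := cardsC A; have := cardsC (h @: A); rewrite card_in_imset //; lia.
Qed.

Lemma card_perm_fiber (p : {perm D}) v : #|[set u | p u == v]| = 1.
Proof.
have -> : [set u | p u == v] = p @^-1: [set v] by apply/setP => u; rewrite !inE.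
by rewrite card_preimset ?cards1 //; exact: perm_inj.
Qed.

End Hamming.

Section NormalizedHamming.
Local Open Scope R_scope.
Variable D : finType.
Implicit Types (f g h a b : D -> D).

Lemma inv_card_ge0 : 0 <= / INR #|D|.
Proof.
have [->|D_gt0] := posnP #|D|; first by rewrite Rinv_0; apply: Rle_refl.
by apply/Rlt_le/Rinv_0_lt_compat/lt_0_INR/ltP.
Qed.

Lemma d_ham_leq f g n : (hamming f g <= n)%N -> d_ham f g <= INR n / INR #|D|.
Proof.
by move=> /leP /le_INR le_fg; apply: Rmult_le_compat_r => //; exact: inv_card_ge0.
Qed.

Lemma d_hamC f g : d_ham f g = d_ham g f.
Proof. by rewrite /d_ham -/(hamming f g) hammingC. Qed.

Lemma d_ham_ext f f' g g' : f =1 f' -> g =1 g' -> d_ham f g = d_ham f' g'.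
Proof.
by move=> ff' gg'; rewrite /d_ham; congr (INR _ / _); apply: eq_card => v; rewrite !inE ff' gg'.
Qed.

Lemma d_ham_refl f : d_ham f f = 0.
Proof.
rewrite /d_ham; have -> : [set v | f v != f v] = set0 by apply/setP => v; rewrite !inE eqxx.
by rewrite cards0 Rdiv_0_l.
Qed.

Lemma d_ham_triangle f g h : d_ham f h <= d_ham f g + d_ham g h.
Proof. by rewrite /d_ham -Rdiv_plus_distr -plus_INR; apply/d_ham_leq/hamming_triangle. Qed.

Lemma d_ham_comp (n : nat) a a' b b' :
  (forall u, #|[set v | b v == u]| <= n)%N ->
  d_ham (fun v => a (b v)) (fun v => a' (b' v)) <= INR n * d_ham a a' + d_ham b b'.
Proof.
move=> fiber_b; rewrite /d_ham Rmult_div_assoc -mult_INR -Rdiv_plus_distr -plus_INR.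
exact/d_ham_leq/hamming_comp.
Qed.

Lemma perm_approx_d_ham f h :
  exists p : {perm D}, d_ham p f <= d_ham (fun v => f (h v)) id.
Proof. by have [p le_pf] := perm_approx_hamming f h; exists p; apply: d_ham_leq. Qed.

Lemma d_ham_mul_perturb (n : nat) (s1 s2 s12 t1 t2 t12 : D -> D) :
  (forall u, #|[set v | s2 v == u]| <= n)%N ->
  d_ham t12 (fun v => t1 (t2 v)) <=
    d_ham t12 s12 + d_ham s12 (fun v => s1 (s2 v)) + (INR n * d_ham s1 t1 + d_ham s2 t2).
Proof.
move=> fiber_s2; have := d_ham_comp s1 t1 t2 fiber_s2.
have := d_ham_triangle t12 s12 (fun v => t1 (t2 v)).
have := d_ham_triangle s12 (fun v => s1 (s2 v)) (fun v => t1 (t2 v)).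
lra.
Qed.

End NormalizedHamming.

Lemma sofic_group_strongly_sofic (G : Type) (mul : G -> G -> G) (one : G) :
  sofic_group mul one -> strongly_sofic_monoid mul one.
Proof.
move=> soficG K; exists 1; split=> // eps eps_gt0.
have [D [sigma [D_gt0 [sigma1 [sigma_mul sigma_sep]]]]] := soficG K eps eps_gt0.
exists D, (fun g => sigma g); do 4?split=> //.
- by move=> v; rewrite sigma1 perm1.
- by move=> k v _; rewrite card_perm_fiber.
Qed.

Section Groups.
Variables (G : Type) (mul : G -> G -> G) (one : G) (inv : G -> G).
Hypothesis grpG : is_group mul one inv.

Lemma group_invK x : inv (inv x) = x.
Proof.
have [[mulA [mul1g mulg1]] [mulVg _]] := grpG.
by rewrite -[RHS]mul1g -(mulVg (inv x)) -mulA mulVg mulg1.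
Qed.

Lemma exists_inv_closed_superlist (K : list G) :
  exists K' : list G,
    [/\ forall g, In g K -> In g K',
        forall g h, In g K -> In h K -> In (mul g h) K'
      & forall g, In g K' -> In (inv g) K'].
Proof.
pose S := K ++ flat_map (fun g => List.map (mul g) K) K.
exists (S ++ List.map inv S); split.
- by move=> g gK; apply/in_or_app; left; apply/in_or_app; left.
- move=> g h gK hK; apply/in_or_app; left; apply/in_or_app; right.
  by apply/in_flat_map; exists g; split => //; apply: in_map.
- move=> g /in_app_iff [gS | /in_map_iff [x [<- xS]]]; apply/in_or_app.
    by right; apply: in_map.
  by left; rewrite group_invK.
Qed.

Local Open Scope R_scope.

Lemma perm_approx_family (K : list G) (D : finType) (s : G -> D -> D) (e : R) :
  0 <= e -> (forall v, s one v = v) -> (forall g, In g K -> In (inv g) K) ->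
  (forall g h, In g K -> In h K -> d_ham (s (mul g h)) (fun v => s g (s h v)) <= e) ->
  exists tau : G -> {perm D}, tau one = 1%g /\ forall g, In g K -> d_ham (tau g) (s g) <= e.
Proof.
move=> e_ge0 s1 Kinv s_mul.
have near g : exists p : {perm D}, (g = one -> p = 1%g) /\ (In g K -> d_ham p (s g) <= e).
  case: (classic (g = one)) => [-> | g_ne1].
    exists 1%g; split=> // _.
    by rewrite (@d_ham_ext _ _ id _ id) ?d_ham_refl // => v; rewrite ?perm1 ?s1.
  case: (classic (In g K)) => [gK | gNK]; last by exists 1%g; split=> // /gNK.
  have [p le_p] := perm_approx_d_ham (s g) (s (inv g)).
  exists p; split=> [/g_ne1 // | _].
  apply: Rle_trans le_p (Rle_trans _ _ _ (Req_le _ _ _) (s_mul g (inv g) gK (Kinv g gK))).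
  have [_ [_ mulgV]] := grpG.
  by rewrite d_hamC; apply: d_ham_ext => v //; rewrite mulgV s1.
have [tau tauP] := choice _ near.
by exists tau; split=> [|g]; [apply: (tauP one).1 | apply: (tauP g).2].
Qed.

Lemma strongly_sofic_group_sofic :
  strongly_sofic_monoid mul one -> sofic_group mul one.
Proof.
move=> ssG K eps eps_gt0.
have [K' [KK' KKK' K'inv]] := exists_inv_closed_superlist K.
have [n [_ ssK']] := ssG K'.
pose e := eps / (INR n + 3).
have n3_gt0 : 0 < INR n + 3 by have := pos_INR n; lra.
have e_gt0 : 0 < e by apply: Rdiv_lt_0_compat.
have eps_e : eps = INR n * e + 3 * e by rewrite /e; field; lra.
have [D [s [D_gt0 [s1 [s_mul [s_sep s_fib]]]]]] := ssK' e e_gt0.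
have [tau [tau1 tau_s]] := perm_approx_family (Rlt_le _ _ e_gt0) s1 K'inv s_mul.
have s_tau g : In g K -> d_ham (s g) (tau g) <= e by move=> /KK' /tau_s; rewrite d_hamC.
exists D, tau; do 2!split=> //; split=> [k1 k2 k1K k2K | k1 k2 k1K k2K k12].
- have fiber_s2 u := s_fib _ u (KK' _ k2K).
  apply: Rle_trans (d_ham_mul_perturb (s k1) (s (mul k1 k2)) (tau k1) (tau k2)
                      (tau (mul k1 k2)) fiber_s2) _.
  have := Rmult_le_compat_l _ _ _ (pos_INR n) (s_tau _ k1K).
  have := tau_s _ (KKK' _ _ k1K k2K); have := s_mul _ _ (KK' _ k1K) (KK' _ k2K).
  have := s_tau _ k2K; lra.
- change (1 - eps <= d_ham (tau k1) (tau k2)).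
  have := d_ham_triangle (s k1) (tau k1) (s k2).
  have := d_ham_triangle (tau k1) (tau k2) (s k2); rewrite (d_hamC (tau k2)).
  have := s_sep _ _ (KK' _ k1K) (KK' _ k2K) k12; have := s_tau _ k1K; have := s_tau _ k2K.
  have := Rmult_le_pos _ _ (pos_INR n) (Rlt_le _ _ e_gt0); lra.
Qed.

End Groups.

Theorem proposition3p3 (G : Type) (mul : G -> G -> G) (one : G) (inv : G -> G) :
  is_group mul one inv ->
  (sofic_group mul one <-> strongly_sofic_monoid mul one).
Proof.
move=> grpG; split; first exact: sofic_group_strongly_sofic.
exact: strongly_sofic_group_sofic grpG.
Qed.
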